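(* Assume $\Omega^*\neq\emptyset$, let $\sigma\in[0,c]$, and let an initial point $\omega_0$ be given. Then there exist parameters $(W_k,\theta_k,\beta_k)\in\mathcal{S}(\sigma,A)$, $k\ge0$, such that for the sequence $\{\omega_k\}$ generated by the iteration below, the quantity $\operatorname{dist}^2_{\mathcal{H}_k}(\omega_k,\Omega^* )$ decreases monotonically in $k$ for all sufficiently large $k$.
   Context: Let $A\in\mathbb{R}^{m\times d}$, $X\in\mathbb{R}^{m\times n}$, and let $f:\mathbb{R}^{d\times n}\to\mathbb{R}$, $g:\mathbb{R}^{m\times n}\to\mathbb{R}$ be convex. Consider the problem $\min_{Z,E} f(Z)+g(E)$ subject to $X=AZ+E$. Triples are written $\omega=(Z,E,-\lambda)$ with $\lambda\in\mathbb{R}^{m\times n}$ a Lagrange multiplier; the inner product of triples is the sum of componentwise Frobenius inner products. $\Omega^*$ is the solution set: the set of $\omega^*=(Z^*,E^*,-\lambda^* )$ with $0\in\partial f(Z^* )+A^\top\lambda^*$, $0\in\partial g(E^* )+\lambda^*$, $AZ^*+E^*=X$. $\circ$ is the Hadamard product; $\beta^{-1}$ is the entrywise reciprocal; $\tfrac{\theta}{2}\circ\|M\|_F^2:=\tfrac12\sum_{ij}\theta_{ij}M_{ij}^2$. Iteration (D-LADMM), with parameters $W_k\in\mathbb{R}^{m\times d}$, $\theta_k\in\mathbb{R}^{d\times n}$, $\beta_k\in\mathbb{R}^{m\times n}$: $Z_{k+1}=\arg\min_Z\{ f(Z)+\tfrac{\theta_k}{2}\circ\|Z-Z_k+\theta_k^{-1}\circ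 W_k^\top(\lambda_k+\beta_k\circ(AZ_k+E_k-X))\|_F^2\}$, $E_{k+1}=\arg\min_E\{g(E)+\tfrac{\beta_k}{2}\circ\|E-X+AZ_{k+1}+\beta_k^{-1}\circ\lambda_k\|_F^2\}$, $\lambda_{k+1}=\lambda_k+\beta_k\circ(AZ_{k+1}+E_{k+1}-X)$. $\mathcal{D}_k(Z)=\theta_k\circ Z-W_k^\top(\beta_k\circ(AZ))$; $\mathcal{H}_k(Z,E,-\lambda)=(\mathcal{D}_k(Z),\ \beta_k\circ E,\ \beta_k^{-1}\circ(-\lambda))$; $\|\omega\|_{\mathcal{H}}^2=\langle\omega,\mathcal{H}(\omega)\rangle$; $\operatorname{dist}^2_{\mathcal{H}}(\omega,\Omega^* )=\min_{\omega^*\in\Omega^*}\|\omega-\omega^*\|^2_{\mathcal{H}}$. $\mathcal{S}(\sigma,A)$ is the set of $(W,\theta,\beta)$ with $\|W-A\|\le\sigma$ (spectral norm), $\theta,\beta$ entrywise positive, and $Z\mapsto\theta\circ Z-W^\top(\beta\circ(AZ))$ positive definite ($\langle\cdot(Z),Z\rangle>0$ for $Z\neq0$). Standing assumption: there is a constant $c$ such that $\mathcal{S}(\sigma,A)\ne\emptyset$ for all $0\le\sigma\le c$. *)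

From HB Require Import structures.
From mathcomp Require Import all_boot all_order all_algebra.
From mathcomp Require Import classical_sets reals.
Set Implicit Arguments. Unset Strict Implicit. Unset Printing Implicit Defensive.
Import Order.TTheory GRing.Theory Num.Theory.
Local Open Scope ring_scope.
Local Open Scope classical_set_scope.

Section DLADMM.
Variable R : realType.

Definition frob {p q : nat} (M N : 'M[R]_(p, q)) : R :=
  \sum_(i < p) \sum_(j < q) M i j * N i j.

Definition hada {p q : nat} (M N : 'M[R]_(p, q)) : 'M[R]_(p, q) :=
  map2_mx (fun a b => a * b) M N.
Definition erecip {p q : nat} (M : 'M[R]_(p, q)) : 'M[R]_(p, q) :=
  map_mx (fun a => a^-1) M.

Definition wsqnorm {p q : nat} (theta M : 'M[R]_(p, q)) : R :=
  2^-1 * \sum_(i < p) \sum_(j < q) theta i j * M i j ^+ 2.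

Definition convex_fun {p q : nat} (f : 'M[R]_(p, q) -> R) : Prop :=
  forall (x y : 'M[R]_(p, q)) (t : R), 0 <= t -> t <= 1 ->
    f (t *: x + (1 - t) *: y) <= t * f x + (1 - t) * f y.

Definition subdiff {p q : nat} (f : 'M[R]_(p, q) -> R) (Z : 'M[R]_(p, q))
  : set 'M[R]_(p, q) :=
  [set G | forall Z', f Z + frob G (Z' - Z) <= f Z'].

Definition vnorm {p : nat} (x : 'cV[R]_p) : R := Num.sqrt (frob x x).
Definition specnorm {p q : nat} (M : 'M[R]_(p, q)) : R :=
  sup [set vnorm (M *m x) | x in [set x : 'cV[R]_q | vnorm x = 1]].

Definition mx_pos {p q : nat} (M : 'M[R]_(p, q)) : Prop :=
  forall i j, 0 < M i j.

Definition Dop {m d n : nat} (A W : 'M[R]_(m, d)) (theta : 'M[R]_(d, n))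
  (beta : 'M[R]_(m, n)) (Z : 'M[R]_(d, n)) : 'M[R]_(d, n) :=
  hada theta Z - W^T *m hada beta (A *m Z).

Definition Sset {m d n : nat} (sigma : R) (A : 'M[R]_(m, d))
  (W : 'M[R]_(m, d)) (theta : 'M[R]_(d, n)) (beta : 'M[R]_(m, n)) : Prop :=
  [/\ specnorm (W - A) <= sigma, mx_pos theta, mx_pos beta &
      forall Z : 'M[R]_(d, n), Z != 0 -> 0 < frob (Dop A W theta beta Z) Z].

(* triples omega = (Z, E, -lambda); the third component stores -lambda *)
Definition triple (m d n : nat) : Type :=
  ('M[R]_(d, n) * 'M[R]_(m, n) * 'M[R]_(m, n))%type.

Definition mk_triple {m d n : nat} (Z : 'M[R]_(d, n)) (E lam : 'M[R]_(m, n))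
  : triple m d n := (Z, E, - lam).

Definition trip_sub {m d n : nat} (u v : triple m d n) : triple m d n :=
  (u.1.1 - v.1.1, u.1.2 - v.1.2, u.2 - v.2).

Definition trip_inner {m d n : nat} (u v : triple m d n) : R :=
  frob u.1.1 v.1.1 + frob u.1.2 v.1.2 + frob u.2 v.2.

Definition Hop {m d n : nat} (A W : 'M[R]_(m, d)) (theta : 'M[R]_(d, n))
  (beta : 'M[R]_(m, n)) (u : triple m d n) : triple m d n :=
  (Dop A W theta beta u.1.1, hada beta u.1.2, hada (erecip beta) u.2).

Definition Hsqnorm {m d n : nat} (A W : 'M[R]_(m, d)) (theta : 'M[R]_(d, n))
  (beta : 'M[R]_(m, n)) (u : triple m d n) : R :=
  trip_inner u (Hop A W theta beta u).

Definition Omega_star {m d n : nat} (A : 'M[R]_(m, d)) (X : 'M[R]_(m, n))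
  (f : 'M[R]_(d, n) -> R) (g : 'M[R]_(m, n) -> R) : set (triple m d n) :=
  [set w | exists (Z : 'M[R]_(d, n)) (E lam : 'M[R]_(m, n)),
     [/\ w = mk_triple Z E lam,
         (exists2 G, subdiff f Z G & G + A^T *m lam = 0),
         (exists2 G, subdiff g E G & G + lam = 0) &
         A *m Z + E = X]].

(* dist^2_H(omega, Omega_star) = min over omega_star in Omega_star (taken as inf) *)
Definition dist2H {m d n : nat} (A W : 'M[R]_(m, d)) (theta : 'M[R]_(d, n))
  (beta : 'M[R]_(m, n)) (Om : set (triple m d n)) (w : triple m d n) : R :=
  inf [set Hsqnorm A W theta beta (trip_sub w ws) | ws in Om].

Definition is_argmin {T : Type} (F : T -> R) (x : T) : Prop :=
  forall y, F x <= F y.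

Definition dladmm_seq {m d n : nat} (A : 'M[R]_(m, d)) (X : 'M[R]_(m, n))
  (f : 'M[R]_(d, n) -> R) (g : 'M[R]_(m, n) -> R)
  (W : nat -> 'M[R]_(m, d)) (theta : nat -> 'M[R]_(d, n))
  (beta : nat -> 'M[R]_(m, n))
  (Z : nat -> 'M[R]_(d, n)) (E lam : nat -> 'M[R]_(m, n)) : Prop :=
  forall k : nat,
  [/\ is_argmin (fun Z' => f Z' + wsqnorm (theta k)
         (Z' - Z k + hada (erecip (theta k))
            ((W k)^T *m (lam k + hada (beta k) (A *m Z k + E k - X)))))
        (Z k.+1),
      is_argmin (fun E' => g E' + wsqnorm (beta k)
         (E' - X + A *m Z k.+1 + hada (erecip (beta k)) (lam k)))
        (E k.+1) &
      lam k.+1 = lam k + hada (beta k) (A *m Z k.+1 + E k.+1 - X)].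

End DLADMM.

From mathcomp Require Import all_boot all_order all_algebra.
From mathcomp Require Import classical_sets reals.
From mathcomp Require Import ring lra.
Import Order.TTheory GRing.Theory Num.Theory.
Local Open Scope ring_scope.
Local Open Scope classical_set_scope.

Set Implicit Arguments. Unset Strict Implicit. Unset Printing Implicit Defensive.

(* With the constant parameters W = A, theta = 1 + |A|_F^2 and beta = 1, which lie in
   S(sigma, A) for every sigma >= 0, D-LADMM is a linearized ADMM whose H-norm is
   theta |Z|^2 - |A Z|^2 + |E|^2 + |lambda|^2, positive definite since
   |A Z|_F <= |A|_F |Z|_F.
   Each update is a proximal step, so its optimality condition yields a subgradient of
   f or g.  Monotonicity of these subdifferentials, tested against a KKT point and (for g)
   against the previous update, gives <u_k - u_(k+1), u_(k+1) - u*>_H >= 0 from k = 1 on;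
   the three-point identity then gives |u_(k+1) - u*|_H <= |u_k - u*|_H for every
   u* in Omega*, and taking infima over Omega* gives the claim. *)

Section Frobenius.
Variable R : realType.
Implicit Types p q : nat.

Lemma frob_trace p q (M N : 'M[R]_(p, q)) : frob M N = \tr (M *m N^T).
Proof.
rewrite /frob /mxtrace; apply: eq_bigr => i _; rewrite mxE.
by apply: eq_bigr => j _; rewrite mxE.
Qed.

Lemma frobC p q (M N : 'M[R]_(p, q)) : frob M N = frob N M.
Proof. by rewrite !frob_trace -mxtrace_tr trmx_mul trmxK. Qed.

Lemma frobDl p q (M N P : 'M[R]_(p, q)) : frob (M + N) P = frob M P + frob N P.
Proof. by rewrite !frob_trace mulmxDl mxtraceD. Qed.

Lemma frobZl p q a (M P : 'M[R]_(p, q)) : frob (a *: M) P = a * frob M P.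
Proof. by rewrite !frob_trace -scalemxAl mxtraceZ. Qed.

Lemma frobNl p q (M P : 'M[R]_(p, q)) : frob (- M) P = - frob M P.
Proof. by rewrite -scaleN1r frobZl mulN1r. Qed.

Lemma frobBl p q (M N P : 'M[R]_(p, q)) : frob (M - N) P = frob M P - frob N P.
Proof. by rewrite frobDl frobNl. Qed.

Lemma frobDr p q (M N P : 'M[R]_(p, q)) : frob P (M + N) = frob P M + frob P N.
Proof. by rewrite frobC frobDl !(frobC P). Qed.

Lemma frobZr p q a (M P : 'M[R]_(p, q)) : frob P (a *: M) = a * frob P M.
Proof. by rewrite frobC frobZl frobC. Qed.

Lemma frobNr p q (M P : 'M[R]_(p, q)) : frob P (- M) = - frob P M.
Proof. by rewrite frobC frobNl frobC. Qed.

Lemma frobBr p q (M N P : 'M[R]_(p, q)) : frob P (M - N) = frob P M - frob P N.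
Proof. by rewrite frobDr frobNr. Qed.

Lemma frobNN p q (M N : 'M[R]_(p, q)) : frob (- M) (- N) = frob M N.
Proof. by rewrite frobNl frobNr opprK. Qed.

Lemma frob_mulTmx m p q (A : 'M[R]_(m, p)) (M : 'M[R]_(m, q)) (N : 'M[R]_(p, q)) :
  frob (A^T *m M) N = frob M (A *m N).
Proof. by rewrite !frob_trace trmx_mul mulmxA [RHS]mxtrace_mulC mulmxA. Qed.

Lemma frob_sqrD p q (M N : 'M[R]_(p, q)) :
  frob (M + N) (M + N) = frob M M + frob N N + 2 * frob M N.
Proof. by rewrite frobDl !frobDr (frobC N M); ring. Qed.

Lemma frob_sqrB p q (M N : 'M[R]_(p, q)) :
  frob (M - N) (M - N) = frob M M + frob N N - 2 * frob M N.
Proof. by rewrite frob_sqrD frobNN frobNr; ring. Qed.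

Lemma frob_ge0 p q (M : 'M[R]_(p, q)) : 0 <= frob M M.
Proof. by apply: sumr_ge0 => i _; apply: sumr_ge0 => j _; rewrite -expr2 sqr_ge0. Qed.

Lemma frob_gt0 p q (M : 'M[R]_(p, q)) : M != 0 -> 0 < frob M M.
Proof.
apply: contraNT; rewrite -leNgt => M_le0; apply/eqP/matrixP => i j.
have M0 : frob M M = 0 by apply/eqP; rewrite eq_le M_le0 frob_ge0.
have row_eq0 := psumr_eq0P (fun i _ => sumr_ge0 _ (fun j _ => sqr_ge0 (M i j))) M0.
have /eqP := psumr_eq0P (fun j _ => sqr_ge0 (M i j)) (row_eq0 i isT) (i := j) isT.
by rewrite mulf_eq0 orbb mxE => /eqP.
Qed.

Lemma sum_mul_sqr_le k (a b : 'I_k -> R) :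
  (\sum_i a i * b i) ^+ 2 <= (\sum_i a i ^+ 2) * \sum_i b i ^+ 2.
Proof.
set Saa := \sum_i a i ^+ 2; set Sbb := \sum_i b i ^+ 2; set Sab := \sum_i a i * b i.
have Saa_ge0 : 0 <= Saa by apply: sumr_ge0 => i _; exact: sqr_ge0.
have [Saa0 | Saa_neq0] := eqVneq Saa 0.
  have a0 i : a i = 0.
    apply/eqP; rewrite -sqrf_eq0; apply/eqP/(psumr_eq0P _ Saa0 (i := i)) => // j _.
    exact: sqr_ge0.
  by rewrite /Sab big1 ?expr0n ?Saa0 ?mul0r // => i _; rewrite a0 mul0r.
have expand x y :
    \sum_i (x * a i - y * b i) ^+ 2 = x ^+ 2 * Saa - 2 * x * y * Sab + y ^+ 2 * Sbb.
  rewrite /Saa /Sab /Sbb !mulr_sumr -sumrB -big_split /=.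
  by apply: eq_bigr => i _; ring.
have : 0 <= \sum_i (Sab * a i - Saa * b i) ^+ 2.
  by apply: sumr_ge0 => i _; exact: sqr_ge0.
rewrite expand.
have : 0 < Saa by rewrite lt_def Saa_neq0.
nra.
Qed.

Lemma frob_mulmx_le m p q (A : 'M[R]_(m, p)) (Z : 'M[R]_(p, q)) :
  frob (A *m Z) (A *m Z) <= frob A A * frob Z Z.
Proof.
rewrite [X in _ <= X * _]/frob mulr_suml; apply: ler_sum => i _.
rewrite [X in _ <= _ * X]/frob exchange_big mulr_sumr; apply: ler_sum => j _ /=.
rewrite mxE -expr2; under eq_bigr do rewrite -expr2.
under [X in _ * X]eq_bigr do rewrite -expr2.
exact: (sum_mul_sqr_le (A i) (Z^~ j)).
Qed.

End Frobenius.

Lemma ge0_of_affine_ge0 (R : realFieldType) (a b : R) :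
  0 <= b -> (forall s, 0 < s -> s <= 1 -> 0 <= a + s * b) -> 0 <= a.
Proof.
move=> b_ge0 affine_ge0; rewrite leNgt; apply/negP => a_lt0.
have ba_gt0 : 0 < b - a by lra.
(* At [s = - a / (b - a)] the value [a + s * b] equals [- a ^+ 2 / (b - a) < 0]. *)
set s := - a / (b - a).
have s_ba : s * (b - a) = - a by rewrite /s divfK // gt_eqF.
have s_gt0 : 0 < s by rewrite /s divr_gt0 // oppr_gt0.
have s_le1 : s <= 1 by rewrite /s ler_pdivrMr // mul1r; lra.
have := affine_ge0 s s_gt0 s_le1.
have : (a + s * b) * (b - a) = - (a * a) by nra.
nra.
Qed.

Section Subgradients.
Variables (R : realType) (p q : nat).
Implicit Types (F : 'M[R]_(p, q) -> R) (w : R) (M Y Z : 'M[R]_(p, q)).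

Lemma wsqnorm_const w M : wsqnorm (const_mx w) M = 2^-1 * w * frob M M.
Proof.
rewrite /wsqnorm /frob -[RHS]mulrA; congr (_ * _); rewrite mulr_sumr; apply: eq_bigr => i _.
by rewrite mulr_sumr; apply: eq_bigr => j _; rewrite mxE expr2.
Qed.

Lemma prox_subdiff F w Y Z : convex_fun F -> 0 < w ->
  is_argmin (fun Z' => F Z' + wsqnorm (const_mx w) (Z' - Y)) Z ->
  subdiff F Z (w *: (Y - Z)).
Proof.
move=> F_convex w_gt0 Z_min Z'; set D := Z' - Z.
suff : 0 <= F Z' - F Z - w * frob (Y - Z) D by rewrite frobZl; lra.
apply: (@ge0_of_affine_ge0 _ _ (2^-1 * w * frob D D)).
  by have := frob_ge0 D; nra.
move=> s s_gt0 s_le1.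
have F_conv := F_convex Z' Z s (ltW s_gt0) s_le1.
have := Z_min (s *: Z' + (1 - s) *: Z).
have -> : s *: Z' + (1 - s) *: Z - Y = s *: D - (Y - Z).
  by apply/matrixP => i j; rewrite /D !mxE; ring.
rewrite /= -(opprB Y Z) !wsqnorm_const frobNN.
rewrite (frob_sqrB (s *: D)) !frobZl frobZr (frobC D (Y - Z)) => Z_le.
have : 0 <= s * (F Z' - F Z - w * frob (Y - Z) D + s * (2^-1 * w * frob D D)).
  by nra.
by rewrite pmulr_rge0.
Qed.

Lemma subdiff_monotone F Z1 Z2 G1 G2 :
  subdiff F Z1 G1 -> subdiff F Z2 G2 -> 0 <= frob (G1 - G2) (Z1 - Z2).
Proof.
move=> G1_sub G2_sub; have := G1_sub Z2; have := G2_sub Z1.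
by rewrite frobBl -(opprB Z1 Z2) !frobNr; lra.
Qed.

End Subgradients.

Section HNorm.
Variables (R : realType) (m d n : nat) (A : 'M[R]_(m, d)) (t : R).
Implicit Types (Z : 'M[R]_(d, n)) (E L : 'M[R]_(m, n)).

Definition hdot Z1 E1 L1 Z2 E2 L2 : R :=
  t * frob Z1 Z2 - frob (A *m Z1) (A *m Z2) + frob E1 E2 + frob L1 L2.

Definition hnorm Z E L : R := hdot Z E L Z E L.

Lemma hnormD Z1 E1 L1 Z2 E2 L2 :
  hnorm (Z1 + Z2) (E1 + E2) (L1 + L2) =
  hnorm Z1 E1 L1 + hnorm Z2 E2 L2 + 2 * hdot Z1 E1 L1 Z2 E2 L2.
Proof. by rewrite /hnorm /hdot mulmxDr !frob_sqrD; ring. Qed.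

(* [dZ = Z_k - Z_(k+1)] and [eZ = Z_(k+1) - Z*], likewise for [E] and [lambda]; the
   last three hypotheses are the monotonicity of the subdifferentials of [f] and [g]. *)
Lemma hdot_ge0 dZ eZ dE eE dL eL :
  dL = - (A *m eZ + eE) ->
  0 <= frob (t *: dZ - A^T *m (A *m dZ + dE + eL)) eZ ->
  frob eL eE <= 0 -> frob dL dE <= 0 ->
  0 <= hdot dZ dE dL eZ eE eL.
Proof.
move=> dL_def f_mono g_mono g_mono_prev.
have AeZ : A *m eZ = - dL - eE by rewrite dL_def opprK addrK.
rewrite frobBl frobZl frob_mulTmx AeZ !frobDl !frobBr !frobNr in f_mono.
rewrite /hdot AeZ !frobBr !frobNr (frobC dL eL); rewrite (frobC dL dE) in g_mono_prev.
lra.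
Qed.

Hypothesis A_le : forall Z, frob (A *m Z) (A *m Z) <= t * frob Z Z.

Lemma hnorm_ge0 Z E L : 0 <= hnorm Z E L.
Proof.
by rewrite /hnorm /hdot; have := A_le Z; have := frob_ge0 E; have := frob_ge0 L; lra.
Qed.

Lemma hnorm_le_add dZ eZ dE eE dL eL :
  0 <= hdot dZ dE dL eZ eE eL ->
  hnorm eZ eE eL <= hnorm (dZ + eZ) (dE + eE) (dL + eL).
Proof. by rewrite hnormD; have := hnorm_ge0 dZ dE dL; lra. Qed.

End HNorm.

Section ConstantParameters.
Variable R : realType.

Lemma hada_const p q a (M : 'M[R]_(p, q)) : hada (const_mx a) M = a *: M.
Proof. by apply/matrixP => i j; rewrite !mxE. Qed.

Lemma hada1 p q (M : 'M[R]_(p, q)) : hada (const_mx 1) M = M.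
Proof. by rewrite hada_const scale1r. Qed.

Lemma erecip_const p q a : erecip (const_mx a : 'M[R]_(p, q)) = const_mx a^-1.
Proof. by apply/matrixP => i j; rewrite !mxE. Qed.

Lemma specnorm0 p q : specnorm (0 : 'M[R]_(p, q)) = 0.
Proof.
rewrite /specnorm; set S := [set _ | _ in _].
have S0 : S `<=` [set 0].
  move=> _ [x _ <-]; rewrite mul0mx /vnorm /frob big1 ?sqrtr0 // => i _.
  by rewrite big1 // => j _; rewrite mxE mul0r.
have [[y Sy] | /nonemptyPn ->] := boolp.pselect (S !=set0); last exact: sup0.
suff -> : S = [set 0] by exact: sup1.
by apply/seteqP; split=> // _ ->; rewrite -(S0 _ Sy).
Qed.

Variables (m d n : nat) (A : 'M[R]_(m, d)).

Lemma frob_Dop_const t (Z Z' : 'M[R]_(d, n)) :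
  frob (Dop A A (const_mx t) (const_mx 1) Z) Z' = t * frob Z Z' - frob (A *m Z) (A *m Z').
Proof. by rewrite /Dop hada_const hada1 frobBl frobZl frob_mulTmx. Qed.

Lemma Sset_const sigma : 0 <= sigma ->
  Sset sigma A A (const_mx (1 + frob A A)) (const_mx 1 : 'M[R]_(m, n)).
Proof.
move=> sigma_ge0; split=> [|i j|i j|Z Z_neq0]; rewrite ?mxE ?ltr01 //.
- by rewrite subrr specnorm0.
- by have := frob_ge0 A; lra.
rewrite frob_Dop_const.
by have := frob_gt0 Z_neq0; have := frob_mulmx_le A Z; have := frob_ge0 A; nra.
Qed.

Lemma Hsqnorm_const_sub t Z E L Z' E' L' :
  Hsqnorm A A (const_mx t) (const_mx 1) (trip_sub (mk_triple Z E L) (mk_triple Z' E' L')) =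
  hnorm A t (Z - Z') (E - E') (L - L' : 'M[R]_(m, n)).
Proof.
rewrite /Hsqnorm /trip_inner /Hop /= [frob (Z - Z') _]frobC frob_Dop_const.
by rewrite erecip_const invr1 !hada1 -opprD frobNN.
Qed.

End ConstantParameters.

Section ConstantIteration.
Variables (R : realType) (m d n : nat) (A : 'M[R]_(m, d)) (X : 'M[R]_(m, n)).
Variables (f : 'M[R]_(d, n) -> R) (g : 'M[R]_(m, n) -> R) (t : R).
Hypotheses (f_convex : convex_fun f) (g_convex : convex_fun g) (t_gt0 : 0 < t).
Hypothesis A_le : forall Z : 'M[R]_(d, n), frob (A *m Z) (A *m Z) <= t * frob Z Z.
Variables (Z : nat -> 'M[R]_(d, n)) (E lam : nat -> 'M[R]_(m, n)).
Hypothesis Z_E_lam :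
  dladmm_seq A X f g (fun=> A) (fun=> const_mx t) (fun=> const_mx 1) Z E lam.

Lemma dladmm_const_step k :
  [/\ subdiff f (Z k.+1) (t *: (Z k - Z k.+1) - A^T *m (lam k + (A *m Z k + E k - X))),
      subdiff g (E k.+1) (- lam k.+1) &
      lam k.+1 = lam k + (A *m Z k.+1 + E k.+1 - X)].
Proof.
have [Z_min E_min lam_next] := Z_E_lam k; rewrite hada1 in lam_next.
split=> //.
- set M := A^T *m _.
  have -> : t *: (Z k - Z k.+1) - M = t *: (Z k - t^-1 *: M - Z k.+1).
    by apply/matrixP => i j; rewrite !mxE; field; rewrite gt_eqF.
  apply: prox_subdiff f_convex t_gt0 _ => Z'.
  have shift Y : Y - Z k + t^-1 *: M = Y - (Z k - t^-1 *: M).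
    by rewrite opprB addrA addrAC.
  by have := Z_min Z'; rewrite /= hada1 erecip_const hada_const !shift.
- have -> : - lam k.+1 = 1 *: (X - A *m Z k.+1 - lam k - E k.+1).
    by rewrite lam_next; apply/matrixP => i j; rewrite !mxE; ring.
  apply: prox_subdiff g_convex ltr01 _ => E'.
  have shift Y : Y - X + A *m Z k.+1 + lam k = Y - (X - A *m Z k.+1 - lam k).
    by apply/matrixP => i j; rewrite !mxE; ring.
  by have := E_min E'; rewrite /= erecip_const invr1 hada1 !shift.
Qed.

Lemma dladmm_hnorm_le k Zs Es ls :
  (exists2 G, subdiff f Zs G & G + A^T *m ls = 0) ->
  (exists2 G, subdiff g Es G & G + ls = 0) ->
  A *m Zs + Es = X ->
  hnorm A t (Z k.+2 - Zs) (E k.+2 - Es) (lam k.+2 - ls)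
  <= hnorm A t (Z k.+1 - Zs) (E k.+1 - Es) (lam k.+1 - ls).
Proof.
move=> [Gf f_sub /eqP]; rewrite addr_eq0 => /eqP Gf_def.
move=> [Gg g_sub /eqP]; rewrite addr_eq0 => /eqP Gg_def feasible; subst Gf Gg.
have [f_step g_step lam_step] := dladmm_const_step k.+1.
have [_ g_step_prev _] := dladmm_const_step k.
rewrite -[Z k.+1 - Zs](subrKA (Z k.+2)) -[E k.+1 - Es](subrKA (E k.+2)).
rewrite -[lam k.+1 - ls](subrKA (lam k.+2)).
apply: (hnorm_le_add A_le); apply: hdot_ge0.
- rewrite lam_step -feasible mulmxBr.
  by apply/matrixP => i j; rewrite !mxE; ring.
- have -> : A *m (Z k.+1 - Z k.+2) + (E k.+1 - E k.+2) + (lam k.+2 - ls) =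
            lam k.+1 + (A *m Z k.+1 + E k.+1 - X) - ls.
    by rewrite lam_step mulmxBr; apply/matrixP => i j; rewrite !mxE; ring.
  have := subdiff_monotone f_step f_sub.
  by rewrite mulmxBr !(frobBl, frobNl); lra.
- have := subdiff_monotone g_step g_sub.
  by rewrite -opprD frobNl; lra.
- have := subdiff_monotone g_step g_step_prev.
  by rewrite -opprD opprB -(opprB (E k.+1)) frobNr; lra.
Qed.

End ConstantIteration.

Lemma inf_image_le (R : realType) (T : Type) (S : set T) (F G : T -> R) :
  S !=set0 -> (forall x, S x -> 0 <= F x) -> (forall x, S x -> F x <= G x) ->
  inf (F @` S) <= inf (G @` S).
Proof.
move=> [x0 Sx0] F_ge0 F_le_G; apply: lb_le_inf; first by exists (G x0), x0.
move=> _ [x Sx <-]; apply: le_trans (F_le_G x Sx).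
by apply: ge_inf; [exists 0 => _ [y Sy <-]; exact: F_ge0 | exists x].
Qed.

Theorem theorem2 (R : realType) (m d n : nat) (A : 'M[R]_(m, d))
  (X : 'M[R]_(m, n)) (f : 'M[R]_(d, n) -> R) (g : 'M[R]_(m, n) -> R)
  (c : R) :
  convex_fun f -> convex_fun g ->
  (forall sigma : R, 0 <= sigma -> sigma <= c ->
     exists W theta beta, @Sset R m d n sigma A W theta beta) ->
  Omega_star A X f g !=set0 ->
  forall sigma : R, 0 <= sigma -> sigma <= c ->
  forall (Z0 : 'M[R]_(d, n)) (E0 lam0 : 'M[R]_(m, n)),
  exists (W : nat -> 'M[R]_(m, d)) (theta : nat -> 'M[R]_(d, n))
         (beta : nat -> 'M[R]_(m, n)),
    (forall k, Sset sigma A (W k) (theta k) (beta k)) /\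
    forall (Z : nat -> 'M[R]_(d, n)) (E lam : nat -> 'M[R]_(m, n)),
      Z 0%N = Z0 -> E 0%N = E0 -> lam 0%N = lam0 ->
      dladmm_seq A X f g W theta beta Z E lam ->
      exists K : nat, forall k : nat, (K <= k)%N ->
        dist2H A (W k.+1) (theta k.+1) (beta k.+1) (Omega_star A X f g)
               (mk_triple (Z k.+1) (E k.+1) (lam k.+1))
        <= dist2H A (W k) (theta k) (beta k) (Omega_star A X f g)
               (mk_triple (Z k) (E k) (lam k)).
Proof.
move=> f_convex g_convex _ Omega_neq0 sigma sigma_ge0 _ Z0 E0 lam0.
pose t := 1 + frob A A.
have t_gt0 : 0 < t by rewrite /t; have := frob_ge0 A; lra.
have A_le (Z : 'M[R]_(d, n)) : frob (A *m Z) (A *m Z) <= t * frob Z Z.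
  by have := frob_mulmx_le A Z; have := frob_ge0 Z; rewrite /t mulrDl mul1r; lra.
exists (fun=> A), (fun=> const_mx t), (fun=> const_mx 1).
split=> [k | Z E lam _ _ _ Z_E_lam]; first exact: Sset_const.
exists 1%N => -[// | k] _.
apply: inf_image_le => // _ [Zs [Es [ls [-> f_opt g_opt feasible]]]].
all: rewrite !Hsqnorm_const_sub.
  exact: hnorm_ge0.
exact: (dladmm_hnorm_le f_convex g_convex t_gt0 A_le Z_E_lam).
Qed.
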